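(* The following two statements are equivalent: (A) for every $n\ge 1$, every antipodal $2$-colouring of $E(Q_n)$ contains a monochromatic geodesic between some pair of antipodal vertices; (B) for every $n\ge 1$, in every $2$-colouring of $E(Q_n)$ there is a geodesic between some pair of antipodal vertices which changes colour at most once.
   Context: The hypercube $Q_n$ has vertex set $\{0,1\}^n$, two vertices adjacent iff they differ in exactly one coordinate; the direction of an edge is that coordinate. A path is a geodesic if no two of its edges have the same direction. The antipodal vertex $x'$ of $x$ is the vertex differing from $x$ in every coordinate; the antipodal edge of $e=xy$ is $x'y'$. A $2$-colouring of $E(Q_n)$ is antipodal if no two antipodal edges receive the same colour. A path changes colour at most once if its edge sequence consists of an (possibly empty) initial segment of one colour followed by a segment of the other colour. *)

From mathcomp Require Import all_boot.
Set Implicit Arguments. Unset Strict Implicit. Unset Printing Implicit Defensive.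

Definition vert (n : nat) := {ffun 'I_n -> bool}.

Definition flip n (x : vert n) (i : 'I_n) : vert n :=
  [ffun j => if j == i then ~~ x j else x j].

Definition antip n (x : vert n) : vert n := [ffun j => ~~ x j].

(* A 2-colouring of E(Q_n): the edge {x, flip x i} (direction i) is encoded
   by the pair (x, i); c x i is its colour.  Well-definedness: both
   encodings of the same edge receive the same colour. *)
Definition edge_colouring n (c : vert n -> 'I_n -> bool) : Prop :=
  forall x i, c (flip x i) i = c x i.

(* antipodal colouring: the antipodal edge x'y' of xy = {x, flip x i}
   is {antip x, flip (antip x) i}; they get different colours. *)
Definition antipodal_colouring n (c : vert n -> 'I_n -> bool) : Prop :=
  forall x i, c (antip x) i != c x i.

(* A path starting at x is given by its sequence of edge directions ds;
   its end vertex and its edge colour sequence: *)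
Definition path_end n (x : vert n) (ds : seq 'I_n) : vert n :=
  foldl (@flip n) x ds.

Fixpoint path_colours n (c : vert n -> 'I_n -> bool) (x : vert n)
    (ds : seq 'I_n) : seq bool :=
  match ds with
  | [::] => [::]
  | d :: ds' => c x d :: path_colours c (flip x d) ds'
  end.

Definition geodesic n (ds : seq 'I_n) : bool := uniq ds.

Definition monochromatic (s : seq bool) : Prop :=
  exists b, all (eq_op^~ b) s.

Definition changes_at_most_once (s : seq bool) : Prop :=
  exists (b : bool) (k : nat),
    all (eq_op^~ b) (take k s) /\ all (eq_op^~ (~~ b)) (drop k s).

From mathcomp Require Import all_boot.
Set Implicit Arguments. Unset Strict Implicit. Unset Printing Implicit Defensive.

(* (B) => (A): if an antipodal geodesic from x changes colour once, after its
   first k edges, rotate it: start at the vertex y reached after k edges, walk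
   the remaining edges to x', then the first k edges from x' to y'.  In an
   antipodal colouring the second part repeats the colours of the first k
   edges negated, so the rotated geodesic is monochromatic.

   (A) => (B): given a colouring c of Q_n, colour Q_(n+1) antipodally: the
   layer x_n = 0 by c, the layer x_n = 1 by the negated colour of the
   antipodal edge, and the edges of the last direction by an antipodal
   function f of the lower layer.  A monochromatic antipodal geodesic of
   Q_(n+1) crosses the last direction exactly once; projecting its two
   halves to Q_n, with the upper half mapped antipodally, and putting the
   upper half first gives an antipodal geodesic changing colour once. *)

Definition has_monochromatic_antipodal_geodesic n (c : vert n -> 'I_n -> bool) :=
  exists (x : vert n) (ds : seq 'I_n),
    [/\ geodesic ds, path_end x ds = antip x & monochromatic (path_colours c x ds)].

Definition has_antipodal_geodesic_changing_once n (c : vert n -> 'I_n -> bool) :=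
  exists (x : vert n) (ds : seq 'I_n),
    [/\ geodesic ds, path_end x ds = antip x &
        changes_at_most_once (path_colours c x ds)].

Section Paths.
Variables (n : nat) (c : vert n -> 'I_n -> bool).

Lemma path_end_cons (x : vert n) d s : path_end x (d :: s) = path_end (flip x d) s.
Proof. by []. Qed.

Lemma path_end_cat (x : vert n) s1 s2 :
  path_end x (s1 ++ s2) = path_end (path_end x s1) s2.
Proof. exact: foldl_cat. Qed.

Lemma path_end_notin (x : vert n) s i : i \notin s -> path_end x s i = x i.
Proof.
elim: s x => [|d s IH] x //; rewrite in_cons negb_or => /andP[id_i /IH ->].
by rewrite ffunE (negbTE id_i).
Qed.

Lemma path_colours_cat (x : vert n) s1 s2 :
  path_colours c x (s1 ++ s2) =
  path_colours c x s1 ++ path_colours c (path_end x s1) s2.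
Proof. by elim: s1 x => [|d s IH] x //=; rewrite IH. Qed.

Lemma take_path_colours (x : vert n) s k :
  take k (path_colours c x s) = path_colours c x (take k s).
Proof. by elim: s x k => [|d s IH] x [|k] //=; rewrite IH. Qed.

Lemma drop_path_colours (x : vert n) s k :
  drop k (path_colours c x s) = path_colours c (path_end x (take k s)) (drop k s).
Proof. by elim: s x k => [|d s IH] x [|k] //=; rewrite IH. Qed.

Lemma antipK : involutive (@antip n).
Proof. by move=> x; apply/ffunP => j; rewrite !ffunE negbK. Qed.

Lemma antip_flip (x : vert n) i : antip (flip x i) = flip (antip x) i.
Proof. by apply/ffunP => j; rewrite !ffunE; case: eqP. Qed.

Lemma path_end_antip (x : vert n) s : path_end (antip x) s = antip (path_end x s).
Proof. by elim: s x => [|d s IH] x //; rewrite !path_end_cons -antip_flip IH. Qed.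

Lemma path_colours_antip (x : vert n) s : antipodal_colouring c ->
  path_colours c (antip x) s = map negb (path_colours c x s).
Proof.
move=> c_antip; elim: s x => [|d s IH] x //=.
rewrite -antip_flip IH; congr (_ :: _).
by move: (c_antip x d); case: (c (antip x) d); case: (c x d).
Qed.

End Paths.

Lemma all_eq_map_negb (b : bool) s :
  all (eq_op^~ b) (map negb s) = all (eq_op^~ (~~ b)) s.
Proof. by rewrite all_map; apply: eq_all => a /=; case: a; case: b. Qed.

Lemma changes_at_most_once_cat (b : bool) s1 s2 :
  all (eq_op^~ (~~ b)) s1 -> all (eq_op^~ b) s2 -> changes_at_most_once (s1 ++ s2).
Proof.
by move=> s1b s2b; exists (~~ b), (size s1); rewrite take_size_cat ?drop_size_cat ?negbK.
Qed.

Lemma monochromatic_geodesic_of_changing_once n (c : vert n -> 'I_n -> bool) :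
  antipodal_colouring c -> has_antipodal_geodesic_changing_once c ->
  has_monochromatic_antipodal_geodesic c.
Proof.
move=> c_antip [x [ds [ds_geo ds_end [b [k []]]]]].
rewrite take_path_colours drop_path_colours.
set y := path_end x (take k ds) => head_b tail_nb.
have tail_end : path_end y (drop k ds) = antip x by rewrite -path_end_cat cat_take_drop.
exists y, (drop k ds ++ take k ds); split.
- by rewrite /geodesic uniq_catC cat_take_drop.
- by rewrite path_end_cat tail_end path_end_antip.
- exists (~~ b); rewrite path_colours_cat all_cat tail_nb tail_end.
  by rewrite path_colours_antip // all_eq_map_negb negbK.
Qed.

Section AntipodalExtension.
Variables (n : nat) (c : vert n -> 'I_n -> bool) (f : vert n -> bool).

Definition proj (x : vert n.+1) : vert n := [ffun j => x (lift ord_max j)].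

Definition antipodal_extension (x : vert n.+1) (i : 'I_n.+1) : bool :=
  match unlift ord_max i with
  | Some j => if x ord_max then ~~ c (antip (proj x)) j else c (proj x) j
  | None => f (proj x)
  end.

Lemma flip_lift_max (x : vert n.+1) j : flip x (lift ord_max j) ord_max = x ord_max.
Proof. by rewrite ffunE (negbTE (neq_lift _ _)). Qed.

Lemma proj_flip_lift (x : vert n.+1) j : proj (flip x (lift ord_max j)) = flip (proj x) j.
Proof. by apply/ffunP => k; rewrite !ffunE (inj_eq lift_inj). Qed.

Lemma proj_flip_max (x : vert n.+1) : proj (flip x ord_max) = proj x.
Proof. by apply/ffunP => k; rewrite !ffunE eq_sym (negbTE (neq_lift _ _)). Qed.

Lemma proj_antip (x : vert n.+1) : proj (antip x) = antip (proj x).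
Proof. by apply/ffunP => k; rewrite !ffunE. Qed.

Lemma proj_path_end_lift (x : vert n.+1) t :
  proj (path_end x (map (lift ord_max) t)) = path_end (proj x) t.
Proof. by elim: t x => [|d t IH] x //; rewrite map_cons path_end_cons IH proj_flip_lift. Qed.

Lemma path_end_lift_max (x : vert n.+1) t :
  path_end x (map (lift ord_max) t) ord_max = x ord_max.
Proof.
by apply: path_end_notin; apply/mapP => -[j _ /eqP]; rewrite (negbTE (neq_lift _ _)).
Qed.

Lemma path_colours_extension_lift (x : vert n.+1) t :
  path_colours antipodal_extension x (map (lift ord_max) t) =
  if x ord_max then map negb (path_colours c (antip (proj x)) t)
  else path_colours c (proj x) t.
Proof.
elim: t x => [|d t IH] x /=; first by case: (x ord_max).
rewrite IH flip_lift_max proj_flip_lift antip_flip /antipodal_extension liftK.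
by case: (x ord_max).
Qed.

Lemma antipodal_extension_edge_colouring :
  edge_colouring c -> edge_colouring antipodal_extension.
Proof.
move=> c_edge x i; rewrite /antipodal_extension.
case: (unliftP ord_max i) => [j ->|->]; last by rewrite proj_flip_max.
by rewrite flip_lift_max proj_flip_lift antip_flip !c_edge.
Qed.

Lemma antipodal_extension_antipodal :
  (forall v, f (antip v) = ~~ f v) -> antipodal_colouring antipodal_extension.
Proof.
move=> f_antip x i; rewrite /antipodal_extension proj_antip.
case: (unlift ord_max i) => [j|]; last by rewrite f_antip; case: (f _).
by rewrite ffunE antipK; case: (x ord_max); case: (c _ j); case: (c _ j).
Qed.

End AntipodalExtension.

Lemma map_lift_unlift n (s : seq 'I_n.+1) : ord_max \notin s ->
  s = map (lift ord_max) (pmap (unlift ord_max) s).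
Proof.
elim: s => [|i s IH] //; rewrite in_cons negb_or => /andP[i_max /IH {1}->] /=.
by case: (unliftP ord_max i) i_max => [j ->|->]; rewrite ?eqxx.
Qed.

Lemma geodesic_split_max n (ds : seq 'I_n.+1) : geodesic ds -> ord_max \in ds ->
  exists t1 t2, ds = map (lift ord_max) t1 ++ ord_max :: map (lift ord_max) t2
                /\ geodesic (t2 ++ t1).
Proof.
move=> ds_geo /splitPr ds_split; case: ds_split ds_geo => s1 s2.
rewrite /geodesic cat_uniq /= => /and3P[s1_uniq /norP[s1_max s12] /andP[s2_max s2_uniq]].
exists (pmap (unlift ord_max) s1), (pmap (unlift ord_max) s2).
rewrite -!map_lift_unlift //; split=> //.
rewrite uniq_catC -(map_inj_uniq (@lift_inj _ ord_max)) map_cat -!map_lift_unlift //.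
by rewrite cat_uniq s1_uniq s2_uniq s12.
Qed.

Lemma changing_once_of_extension_monochromatic n (c : vert n -> 'I_n -> bool) f :
  (forall v, f (antip v) = ~~ f v) ->
  has_monochromatic_antipodal_geodesic (antipodal_extension c f) ->
  has_antipodal_geodesic_changing_once c.
Proof.
move=> f_antip; have ext_antip := antipodal_extension_antipodal c f_antip.
move=> [x0 [ds [ds_geo x0_end [b0 x0_b]]]].
(* Replacing x by x' negates the colours, so we may start in the lower layer. *)
have {x0 x0_end b0 x0_b} [x [x_low x_end [b x_b]]] :
    exists x : vert n.+1, [/\ x ord_max = false, path_end x ds = antip x &
      monochromatic (path_colours (antipodal_extension c f) x ds)].
  case x0_max: (x0 ord_max); last by exists x0; split=> //; exists b0.
  exists (antip x0); split; first by rewrite ffunE x0_max.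
    by rewrite path_end_antip x0_end.
  by exists (~~ b0); rewrite path_colours_antip // all_eq_map_negb negbK.
have max_in_ds : ord_max \in ds.
  apply: contraTT isT => /(path_end_notin x).
  by rewrite x_end ffunE x_low.
have [t1 [t2 [ds_split t_geo]]] := geodesic_split_max ds_geo max_in_ds.
move: x_end x_b; rewrite ds_split path_end_cat path_end_cons path_colours_cat /= all_cat /=.
set y := path_end x _; set z := flip y ord_max => z_end /and3P[t1_b _ t2_b].
have z_high : z ord_max by rewrite ffunE eqxx path_end_lift_max x_low.
have proj_z : proj z = path_end (proj x) t1 by rewrite proj_flip_max proj_path_end_lift.
have t2_end : path_end (proj z) t2 = antip (proj x).
  by rewrite -proj_path_end_lift z_end proj_antip.
rewrite !path_colours_extension_lift x_low z_high all_eq_map_negb in t1_b t2_b.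
exists (antip (proj z)), (t2 ++ t1); split => //.
  by rewrite path_end_cat path_end_antip t2_end !antipK proj_z.
rewrite path_colours_cat path_end_antip t2_end antipK.
exact: changes_at_most_once_cat t2_b t1_b.
Qed.

Theorem proposition13 :
  (forall n : nat, 0 < n -> forall c : vert n -> 'I_n -> bool,
     edge_colouring c -> antipodal_colouring c ->
     exists (x : vert n) (ds : seq 'I_n),
       [/\ geodesic ds, path_end x ds = antip x &
           monochromatic (path_colours c x ds)])
  <->
  (forall n : nat, 0 < n -> forall c : vert n -> 'I_n -> bool,
     edge_colouring c ->
     exists (x : vert n) (ds : seq 'I_n),
       [/\ geodesic ds, path_end x ds = antip x &
           changes_at_most_once (path_colours c x ds)]).
Proof.
split=> [A n n_gt0 c c_edge | B n n_gt0 c c_edge c_antip].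
  pose f (v : vert n) := v (Ordinal n_gt0).
  have f_antip v : f (antip v) = ~~ f v by rewrite /f ffunE.
  apply: (changing_once_of_extension_monochromatic f_antip).
  apply: A => //; first exact: antipodal_extension_edge_colouring.
  exact: antipodal_extension_antipodal.
exact/(monochromatic_geodesic_of_changing_once c_antip)/B.
Qed.
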